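(* Let $l\ge2$, $a=(a_1,\dots,a_l)$ with all $a_i>0$, and $b=(b_1,\dots,b_l)$ with all $b_i\neq0$, the $b_i$ pairwise distinct, and $b_{i_1}b_{j_1}<0$ for some $i_1\ne j_1$. Let $\bar s(l,a,b)\in\{1,2,\dots\}\cup\{\infty\}$ be the minimal integer $s\ge1$ such that the system $$\sum_{i=1}^l a_ib_i^uc_i^{u+1}=0,\qquad u=0,1,\dots,s,$$ has no real solution $(c_1,\dots,c_l)$ with at least one $c_i\neq0$ ($\bar s=\infty$ if no such $s$ exists). Then: (a) if $\sum_{i\in I}a_i\prod_{j\in I\setminus\{i\}}b_j\neq0$ for every subset $I\subseteq\{1,\dots,l\}$ with $|I|\ge2$, then $\bar s(l,a,b)\le l-1$; (b) if $\sum_{i\in I}a_i\prod_{j\in I\setminus\{i\}}b_j=0$ for some subset $I$ with $|I|\ge2$, then $\bar s(l,a,b)=\infty$; (c) under the hypothesis of (a): if $l=2$ then $\bar s(l,a,b)=1$; if $l=3$ and $\sum_{i=1}^3a_i\prod_{j\neq i}b_j>0$ then $\bar s(l,a,b)=1$, while if $l=3$ and $\sum_{i=1}^3a_i\prod_{j\neq i}b_j<0$ then $\bar s(l,a,b)=2$. *)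

(* The reals are modelled by an arbitrary real closed field R. *)
From HB Require Import structures.
From mathcomp Require Import all_boot all_order all_algebra.
From Stdlib Require Import ClassicalEpsilon.
Set Implicit Arguments. Unset Strict Implicit. Unset Printing Implicit Defensive.
Import Order.TTheory GRing.Theory Num.Theory.
Local Open Scope ring_scope.

Definition no_nontriv_sol (R : rcfType) (l : nat) (a b : 'I_l -> R) (s : nat)
  : Prop :=
  ~ exists c : 'I_l -> R,
      (exists i, c i != 0) /\
      forall u : nat, (u <= s)%N ->
        \sum_(i < l) a i * b i ^+ u * c i ^+ u.+1 = 0.

(* Characterisation of sbar: Some s = minimal s >= 1 with no nontrivial
   solution; None = infinity (no such s). *)
Definition sbar_spec (R : rcfType) (l : nat) (a b : 'I_l -> R)
  (o : option nat) : Prop :=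
  match o with
  | Some s => (1 <= s)%N /\ no_nontriv_sol a b s /\
              forall t, (1 <= t)%N -> (t < s)%N -> ~ no_nontriv_sol a b t
  | None => forall s, (1 <= s)%N -> ~ no_nontriv_sol a b s
  end.

Definition sbar (R : rcfType) (l : nat) (a b : 'I_l -> R) : option nat :=
  epsilon (inhabits None) (sbar_spec a b).

Definition sigmaI (R : rcfType) (l : nat) (a b : 'I_l -> R) (I : {set 'I_l})
  : R :=
  \sum_(i in I) a i * \prod_(j in I | j != i) b j.

(* Put d_i = b_i c_i. The equations u = 0, ..., l - 1 say that the weights
   a_i c_i have vanishing power sums at the nodes d_i, so by Vandermonde the
   weights add up to 0 on every fibre {i | d_i = v}. On a fibre with v <> 0 we
   have c_i = v / b_i, hence sum_I a_i / b_i = 0, i.e. sigma_I = 0, and |I| >= 2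
   since sigma_{i} = a_i. Conversely, if sigma_I = 0 then c_i = 1 / b_i on I
   (and 0 elsewhere) solves every equation. For l = 3 the equations u = 0, 1
   say that x_i = a_i c_i satisfies sum_i x_i = 0 and sum_i (b_i / a_i) x_i^2 = 0,
   so everything hinges on a binary quadratic form whose discriminant has the
   sign opposite to sigma_{1,2,3}. *)

From HB Require Import structures.
From mathcomp Require Import all_boot all_order all_algebra.
From mathcomp Require Import ring zify.
From Stdlib Require Import ClassicalEpsilon Classical.
Set Implicit Arguments.
Unset Strict Implicit.
Unset Printing Implicit Defensive.

Import Order.TTheory GRing.Theory Num.Theory.
Local Open Scope ring_scope.

Lemma fiber_sum_eq0_of_power_sums (R : fieldType) (I : finType) (e d : I -> R) :
  (forall u, (u < #|I|)%N -> \sum_i e i * d i ^+ u = 0) ->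
  forall i0, \sum_(i | d i == d i0) e i = 0.
Proof.
move=> hpow i0; set v := d i0.
(* Pair the power sums with the coefficients of a polynomial of degree
   < #|I| that vanishes at every node except v. *)
pose p := \prod_(j | d j != v) ('X - (d j)%:P).
have size_p : (size p <= #|I|)%N.
  rewrite /p -big_filter -(big_map d predT (fun x => 'X - x%:P)) size_prod_XsubC.
  rewrite size_map size_filter -sum1_count sum1_card -(cardC [pred j | d j != v]).
  rewrite -addn1 leq_add2l lt0n; apply/pred0Pn.
  by exists i0; rewrite !inE /= negbK.
have p_roots : \sum_i e i * p.[d i] = 0.
  under eq_bigr => i _ do
    rewrite (horner_coef_wide _ size_p) mulr_sumr.
  rewrite exchange_big big1 // => k _.
  under eq_bigr => i _ do rewrite mulrCA.
  by rewrite -mulr_sumr hpow ?mulr0.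
have p_v : p.[v] != 0.
  by rewrite horner_prod; apply/prodf_neq0 => j dj_neq_v; rewrite hornerXsubC subr_eq0 eq_sym.
rewrite (bigID (fun i => d i == v)) /= [X in _ + X]big1 ?addr0 in p_roots; last first.
  by move=> i di_neq_v; rewrite horner_prod (bigD1 i) //= hornerXsubC subrr mul0r mulr0.
move: p_roots; rewrite (eq_bigr (fun i => e i * p.[v])) => [|i /eqP -> //].
by rewrite -mulr_suml => /eqP; rewrite mulf_eq0 (negbTE p_v) orbF => /eqP.
Qed.

Lemma ex_minimal (P : nat -> Prop) n :
  P n -> exists m, [/\ P m, (m <= n)%N & forall t, (t < m)%N -> ~ P t].
Proof.
elim/ltn_ind: n => n IH Pn.
case: (classic (exists2 t, (t < n)%N & P t)) => [[t ltn Pt] | no_smaller].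
  have [m [Pm le_mt min_m]] := IH t ltn Pt.
  by exists m; split=> //; apply: leq_trans le_mt (ltnW ltn).
by exists n; split=> // t ltn Pt; apply: no_smaller; exists t.
Qed.

Section Sbar.
Variables (R : rcfType) (l : nat) (a b : 'I_l -> R).

Lemma sbar_spec_uniq o1 o2 : sbar_spec a b o1 -> sbar_spec a b o2 -> o1 = o2.
Proof.
case: o1 => [s1|]; case: o2 => [s2|] //=.
- move=> [s1_gt0 [ns1 min1]] [s2_gt0 [ns2 min2]]; congr Some.
  case: (ltngtP s1 s2) => // [lt12 | lt21].
  + by case: (min2 _ s1_gt0 lt12 ns1).
  + by case: (min1 _ s2_gt0 lt21 ns2).
- by move=> [s1_gt0 [ns1 _]] /(_ s1 s1_gt0).
- by move=> + [s2_gt0 [ns2 _]] => /(_ s2 s2_gt0).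
Qed.

Lemma sbarE o : sbar_spec a b o -> sbar a b = o.
Proof.
move=> spec_o.
have spec_sbar : sbar_spec a b (sbar a b) by apply: epsilon_spec; exists o.
exact: sbar_spec_uniq spec_sbar spec_o.
Qed.

Lemma sbar_Some_le n : (1 <= n)%N -> no_nontriv_sol a b n ->
  exists2 s, sbar a b = Some s & [/\ (1 <= s)%N, (s <= n)%N & no_nontriv_sol a b s].
Proof.
move=> n_gt0 ns_n.
have [s [[s_gt0 ns_s] le_sn min_s]] :=
  @ex_minimal (fun t => (1 <= t)%N /\ no_nontriv_sol a b t) n (conj n_gt0 ns_n).
exists s => //; apply: sbarE; do 2!split=> //.
by move=> t t_gt0 lt_ts ns_t; apply: (min_s t lt_ts).
Qed.

Lemma sbar_eq_None (c : 'I_l -> R) : (exists i, c i != 0) ->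
  (forall u, \sum_(i < l) a i * b i ^+ u * c i ^+ u.+1 = 0) -> sbar a b = None.
Proof.
by move=> c_neq0 c_sol; apply: sbarE => s _; apply; exists c; split=> // u _.
Qed.

End Sbar.

Section SigmaI.
Variables (R : rcfType) (l : nat) (a b : 'I_l -> R).

Lemma sigmaI_set1 i : sigmaI a b [set i] = a i.
Proof.
rewrite /sigmaI big_set1 big_pred0 ?mulr1 // => j.
by rewrite inE andbN.
Qed.

Hypothesis b_neq0 : forall i, b i != 0.

Lemma sigmaIE I : sigmaI a b I = (\prod_(j in I) b j) * \sum_(i in I) a i / b i.
Proof.
rewrite /sigmaI mulr_sumr; apply: eq_bigr => i iI.
by rewrite [in RHS](bigD1 i) //= [RHS]mulrC mulrA divfK.
Qed.

Lemma sigmaI_eq0 I : (sigmaI a b I == 0) = (\sum_(i in I) a i / b i == 0).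
Proof.
have prod_neq0 : \prod_(j in I) b j != 0 by apply/prodf_neq0 => j _.
by rewrite sigmaIE mulf_eq0 (negbTE prod_neq0).
Qed.

Lemma sbar_None_of_sigmaI_eq0 I : I != set0 -> sigmaI a b I = 0 -> sbar a b = None.
Proof.
case/set0Pn=> i0 i0I /eqP; rewrite sigmaI_eq0 => /eqP sum_I.
(* With c_i = 1 / b_i on I, every equation of the system reads sum_I a_i / b_i = 0. *)
apply: (@sbar_eq_None _ _ _ _ (fun i => if i \in I then (b i)^-1 else 0)).
  by exists i0; rewrite i0I invr_eq0.
move=> u; rewrite (bigID (mem I)) /= [X in _ + X]big1 ?addr0; last first.
  by move=> i /negbTE ->; rewrite expr0n mulr0.
rewrite -[RHS]sum_I; apply: eq_bigr => i ->.
rewrite exprVn exprS; field.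
by rewrite expf_neq0 ?b_neq0.
Qed.

Hypothesis a_neq0 : forall i, a i != 0.

Lemma no_nontriv_sol_pred :
  (forall I : {set 'I_l}, (2 <= #|I|)%N -> sigmaI a b I != 0) ->
  no_nontriv_sol a b l.-1.
Proof.
move=> sigma_neq0 [c [[i0 c_i0] c_sol]].
pose v := b i0 * c i0; pose I := [set i | b i * c i == v].
have fiber : \sum_(i | b i * c i == v) a i * c i = 0.
  apply: (@fiber_sum_eq0_of_power_sums _ _ (fun i => a i * c i) (fun i => b i * c i)).
  move=> u; rewrite card_ord => lt_ul.
  rewrite -[RHS](c_sol u); last by lia.
  by apply: eq_bigr => i _; rewrite exprMn exprS; ring.
have sum_I : \sum_(i in I) a i / b i = 0.
  apply/eqP; rewrite -(mulrI_eq0 _ (lregP (mulf_neq0 (b_neq0 i0) c_i0))) -/v.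
  rewrite mulr_sumr; apply/eqP; rewrite -[RHS]fiber.
  apply: eq_big => [i | i]; first by rewrite inE.
  by rewrite inE => /eqP <-; field.
have sigma_I : sigmaI a b I = 0 by apply/eqP; rewrite sigmaI_eq0 sum_I.
have [/sigma_neq0/eqP // | card_I] := leqP 2 #|I|.
suff I1 : I = [set i0] by move/eqP: (a_neq0 i0); rewrite -(sigmaI_set1 i0) -I1.
by apply/eqP; rewrite eq_sym eqEcard sub1set inE eqxx cards1.
Qed.

End SigmaI.

Lemma binary_form_anisotropic (R : realFieldType) (p q r x y : R) :
  q ^+ 2 < p * r -> p * x ^+ 2 + 2 * q * x * y + r * y ^+ 2 = 0 -> x = 0 /\ y = 0.
Proof.
move=> disc_lt0 form0.
have p_neq0 : p != 0.
  by apply: contraTneq disc_lt0 => ->; rewrite mul0r -leNgt sqr_ge0.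
have disc_gt0 : 0 < p * r - q ^+ 2 by rewrite subr_gt0.
have : (p * x + q * y) ^+ 2 + (p * r - q ^+ 2) * y ^+ 2 = 0.
  by rewrite -[RHS](mulr0 p) -form0; ring.
move/eqP; rewrite paddr_eq0 ?sqr_ge0 ?(mulr_ge0 (ltW disc_gt0) (sqr_ge0 y)) //.
rewrite sqrf_eq0 mulf_eq0 (gt_eqF disc_gt0) sqrf_eq0 /= => /andP [/eqP px_qy /eqP y0].
split=> //; apply/eqP; move: px_qy; rewrite y0 mulr0 addr0 => /eqP.
by rewrite mulf_eq0 (negbTE p_neq0).
Qed.

Lemma binary_form_isotropic (R : rcfType) (p q r : R) : p * r <= q ^+ 2 ->
  exists x y, ((x != 0) || (y != 0)) /\ p * x ^+ 2 + 2 * q * x * y + r * y ^+ 2 = 0.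
Proof.
move=> disc_ge0; have [-> | p_neq0] := eqVneq p 0.
  by exists 1, 0; rewrite oner_neq0; split=> //; ring.
pose s := Num.sqrt (q ^+ 2 - p * r).
have s2 : s ^+ 2 = q ^+ 2 - p * r by rewrite sqr_sqrtr // subr_ge0.
exists ((s - q) / p), 1; rewrite oner_neq0 orbT; split=> //.
rewrite -[RHS](mul0r p^-1) -(subrr (s ^+ 2)) {2}s2.
by field.
Qed.

Lemma sum_ord3 (V : nmodType) (F : 'I_3 -> V) :
  \sum_(i < 3) F i = F ord0 + F (lift ord0 ord0) + F (lift ord0 (lift ord0 ord0)).
Proof. by rewrite !big_ord_recl big_ord0 addr0 addrA. Qed.

Section ThreeTerms.
Variables (R : rcfType) (a b : 'I_3 -> R).
Local Notation i0 := (ord0 : 'I_3).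
Local Notation i1 := (lift ord0 ord0 : 'I_3).
Local Notation i2 := (lift ord0 (lift ord0 ord0) : 'I_3).

Lemma sigmaI_setT_ord3 :
  sigmaI a b [set: 'I_3] = a i0 * b i1 * b i2 + a i1 * b i0 * b i2 + a i2 * b i0 * b i1.
Proof.
rewrite /sigmaI (eq_bigl xpredT) => [|i]; last by rewrite in_setT.
under eq_bigr => i _ do rewrite big_mkcond.
by rewrite sum_ord3 !big_ord_recl !big_ord0 !in_setT /=; ring.
Qed.
Hypothesis a_gt0 : forall i, 0 < a i.

Let a_neq0 i : a i != 0. Proof. by rewrite gt_eqF. Qed.

Let w i := b i / a i.

(* The quadratic form obtained by eliminating x_2 = -(x_0 + x_1) from
   sum_i w_i x_i^2, where x_i = a_i c_i. *)
Let form (x y : R) :=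
  (w i0 + w i2) * x ^+ 2 + 2 * w i2 * x * y + (w i1 + w i2) * y ^+ 2.

Lemma form_ord3 (c : 'I_3 -> R) : \sum_(i < 3) a i * c i = 0 ->
  \sum_(i < 3) a i * b i * c i ^+ 2 = form (a i0 * c i0) (a i1 * c i1).
Proof.
rewrite !sum_ord3 => sum0.
have x2 : a i2 * c i2 = - (a i0 * c i0 + a i1 * c i1).
  by apply/eqP; rewrite -addr_eq0 addrC sum0.
by rewrite -[c i2](mulKf (a_neq0 i2)) x2 /form /w; field; rewrite !a_neq0.
Qed.

Lemma system1_ord3 (c : 'I_3 -> R) :
  (forall u, (u <= 1)%N -> \sum_(i < 3) a i * b i ^+ u * c i ^+ u.+1 = 0) <->
  \sum_(i < 3) a i * c i = 0 /\ form (a i0 * c i0) (a i1 * c i1) = 0.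
Proof.
have eq_u0 : \sum_(i < 3) a i * b i ^+ 0 * c i ^+ 1 = \sum_(i < 3) a i * c i.
  by apply: eq_bigr => i _; rewrite mulr1.
have eq_u1 : \sum_(i < 3) a i * b i ^+ 1 * c i ^+ 2 = \sum_(i < 3) a i * b i * c i ^+ 2.
  by [].
split=> [sol | [sum0 form0] [|[|//]] _]; rewrite ?eq_u0 ?eq_u1 //.
  have sum0 : \sum_(i < 3) a i * c i = 0 by rewrite -eq_u0 sol.
  by split=> //; rewrite -form_ord3 // -eq_u1 sol.
by rewrite form_ord3.
Qed.

Lemma form_disc_ord3 :
  (w i0 + w i2) * (w i1 + w i2) - w i2 ^+ 2 =
  sigmaI a b [set: 'I_3] / (a i0 * a i1 * a i2).
Proof. by rewrite sigmaI_setT_ord3 /w; field; rewrite !a_neq0. Qed.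

Lemma no_nontriv_sol1_ord3 : 0 < sigmaI a b [set: 'I_3] -> no_nontriv_sol a b 1.
Proof.
move=> sigma_gt0 [c [[i c_i] /system1_ord3 [sum0 form0]]].
have disc_gt0 : w i2 ^+ 2 < (w i0 + w i2) * (w i1 + w i2).
  by rewrite -subr_gt0 form_disc_ord3 divr_gt0 // !mulr_gt0.
have [x0 x1] := binary_form_anisotropic disc_gt0 form0.
have : \sum_(j < 3) (a j * c j) ^+ 2 = 0.
  by move: sum0; rewrite !sum_ord3 x0 x1 !add0r => ->; rewrite expr0n !addr0.
move/psumr_eq0P => /(_ (fun j _ => sqr_ge0 _) i isT) /eqP.
by rewrite sqrf_eq0 mulf_eq0 (negbTE (a_neq0 i)) (negbTE c_i).
Qed.

Lemma nontriv_sol1_ord3 : sigmaI a b [set: 'I_3] <= 0 -> ~ no_nontriv_sol a b 1.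
Proof.
move=> sigma_le0; apply.
have disc_le0 : (w i0 + w i2) * (w i1 + w i2) <= w i2 ^+ 2.
  by rewrite -subr_le0 form_disc_ord3 pmulr_lle0 // invr_gt0 !mulr_gt0.
have [x [y [xy_neq0 form0]]] := binary_form_isotropic disc_le0.
pose x_ (i : 'I_3) := nth 0 [:: x; y; - (x + y)] i.
have ac i : a i * (x_ i / a i) = x_ i by rewrite mulrC divfK.
exists (fun i => x_ i / a i); split.
  by case/orP: xy_neq0 => [x_neq0 | y_neq0]; [exists i0 | exists i1];
    rewrite mulf_neq0 ?invr_eq0.
by apply/system1_ord3; rewrite sum_ord3 !ac /x_ /= subrr.
Qed.

End ThreeTerms.

Theorem propositionF1 (R : rcfType) (l : nat) (a b : 'I_l -> R)
  (hl : (2 <= l)%N)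
  (ha : forall i, 0 < a i)
  (hb0 : forall i, b i != 0)
  (hbinj : injective b)
  (hmix : exists i1 j1, i1 != j1 /\ b i1 * b j1 < 0) :
  ((forall I : {set 'I_l}, (2 <= #|I|)%N -> sigmaI a b I != 0) ->
     exists s, sbar a b = Some s /\ (s <= l.-1)%N)
  /\
  ((exists I : {set 'I_l}, (2 <= #|I|)%N /\ sigmaI a b I = 0) ->
     sbar a b = None)
  /\
  ((forall I : {set 'I_l}, (2 <= #|I|)%N -> sigmaI a b I != 0) ->
     (l = 2%N -> sbar a b = Some 1%N)
     /\ (l = 3%N -> 0 < sigmaI a b [set: 'I_l] -> sbar a b = Some 1%N)
     /\ (l = 3%N -> sigmaI a b [set: 'I_l] < 0 -> sbar a b = Some 2%N)).
Proof.
have a_neq0 i : a i != 0 by rewrite gt_eqF.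
have sbar_le_pred : (forall I : {set 'I_l}, (2 <= #|I|)%N -> sigmaI a b I != 0) ->
    exists2 s, sbar a b = Some s &
      [/\ (1 <= s)%N, (s <= l.-1)%N & no_nontriv_sol a b s].
  by move=> sigma_neq0; apply: sbar_Some_le; [lia | exact: no_nontriv_sol_pred].
split; [|split].
- by move=> /sbar_le_pred [s -> [_ le_s _]]; exists s.
- move=> [I [card_I sigma_I]]; apply: (sbar_None_of_sigmaI_eq0 hb0 _ sigma_I).
  by rewrite -card_gt0 ltnW.
move=> /sbar_le_pred [s sbar_s [s_gt0 le_s ns_s]].
split; [|split] => l_eq; subst l.
- by rewrite sbar_s; congr Some; apply/eqP; rewrite eqn_leq s_gt0 andbT.
- move=> /(no_nontriv_sol1_ord3 ha) ns1.
  have [s1 -> [s1_gt0 le_s1 _]] := sbar_Some_le (leqnn 1) ns1.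
  by congr Some; apply/eqP; rewrite eqn_leq s1_gt0 andbT.
- move=> /ltW /(nontriv_sol1_ord3 ha) not_ns1; rewrite sbar_s.
  by case: s s_gt0 le_s ns_s {sbar_s} => [|[|[|//]]].
Qed.
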